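(* Let $n,m\ge1$, $q_1,\dots,q_m\in\Delta_n$, $d\in\mathbb{R}^{n^2}_+$, and let $\mathcal Z=\mathcal X\times\mathcal Y$, $G$, $\hat A$, $\mathcal E$ be as in the context. Define the regularizer on $\mathcal Z$ \[r(\mathbf x,\mathbf y)=\frac{2\|d\|_\infty}{m}\Big(10\sum_{i=1}^m\langle x_i,\log x_i\rangle+5m\langle p,\log p\rangle+\hat x^\top\hat A^\top(\mathbf y)^2-p^\top\mathcal E^\top(\mathbf y)^2\Big),\] where $\hat x=(x_1^\top,\dots,x_m^\top)^\top$ and $\log$, $(\cdot)^2$ act entrywise. Then $r$ is $3$-area-convex with respect to $G$, i.e. for all $\boldsymbol a,\boldsymbol b,\boldsymbol c\in\mathcal Z$, \[3\Big(r(\boldsymbol a)+r(\boldsymbol b)+r(\boldsymbol c)-3r\big(\tfrac{\boldsymbol a+\boldsymbol b+\boldsymbol c}{3}\big)\Big)\ge\langle G(\boldsymbol a)-G(\boldsymbol b),\boldsymbol b-\boldsymbol c\rangle.\]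
   Context: $\Delta_k=\{p\in\mathbb{R}^k_+:\sum_j p_j=1\}$. $\mathcal X=(\Delta_{n^2})^m\times\Delta_n$ with elements $\mathbf x=(x_1,\dots,x_m,p)$, $\mathcal Y=[-1,1]^{2mn}$ with elements $\mathbf y=(y_1,\dots,y_m)$, $y_i\in[-1,1]^{2n}$. $A\in\{0,1\}^{2n\times n^2}$ is the incidence matrix with $Ax=(X\mathbf 1;X^\top\mathbf 1)$ for $x$ the vectorization of $X\in\mathbb{R}^{n\times n}$. $\hat A$ is block diagonal with $m$ diagonal blocks $A$; $\mathcal E\in\mathbb{R}^{2mn\times n}$ consists of $m$ vertically stacked blocks each equal to $-\begin{pmatrix}I_n\\0_{n\times n}\end{pmatrix}$; $\boldsymbol A=(\hat A\ \ \mathcal E)$. $\boldsymbol d=(d,\dots,d,0_n)$, $\boldsymbol c=(0_n,q_1,\dots,0_n,q_m)$. $G(\mathbf x,\mathbf y)=\frac1m\big(\boldsymbol d+2\|d\|_\infty\boldsymbol A^\top\mathbf y,\ 2\|d\|_\infty(\boldsymbol c-\boldsymbol A\mathbf x)\big)$, the gradient operator $(\nabla_{\mathbf x}F,-\nabla_{\mathbf y}F)$ of $F(\mathbf x,\mathbf y)=\frac1m\{\boldsymbol d^\top\mathbf x+2\|d\|_\infty(\mathbf y^\top\boldsymbol A\mathbf x-\boldsymbol c^\top\mathbf y)\}$. Convention $0\log0=0$. *)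

From HB Require Import structures.
From mathcomp Require Import all_boot all_order all_algebra.
From mathcomp Require Import reals exp.
Set Implicit Arguments. Unset Strict Implicit. Unset Printing Implicit Defensive.
Import Order.TTheory GRing.Theory Num.Theory.
Local Open Scope ring_scope.

Section Defs.
Variables (R : realType) (m n : nat).

(* A point z = (x_1..x_m, p, y_1..y_m) of R^{m n^2} x R^n x R^{2mn}.
   x i j k = (X^{(i)})_{jk}  (x_i = vectorization of X^{(i)} in R^{n x n});
   y_i = (yr i ; yc i) in R^{2n}: yr i pairs with X^{(i)} 1 (row sums),
   yc i pairs with X^{(i)T} 1 (column sums). *)
Record pt := Pt {
  px : 'I_m -> 'I_n -> 'I_n -> R ;
  pp : 'I_n -> R ;
  pyr : 'I_m -> 'I_n -> R ;
  pyc : 'I_m -> 'I_n -> R }.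

Definition pt_add (a b : pt) : pt :=
  Pt (fun i j k => px a i j k + px b i j k) (fun j => pp a j + pp b j)
     (fun i j => pyr a i j + pyr b i j) (fun i j => pyc a i j + pyc b i j).
Definition pt_scale (s : R) (a : pt) : pt :=
  Pt (fun i j k => s * px a i j k) (fun j => s * pp a j)
     (fun i j => s * pyr a i j) (fun i j => s * pyc a i j).
Definition pt_sub (a b : pt) : pt := pt_add a (pt_scale (-1) b).

Definition pt_dot (a b : pt) : R :=
  \sum_(i < m) \sum_(j < n) \sum_(k < n) px a i j k * px b i j k
  + \sum_(j < n) pp a j * pp b j
  + \sum_(i < m) \sum_(j < n) pyr a i j * pyr b i j
  + \sum_(i < m) \sum_(k < n) pyc a i k * pyc b i k.

Definition in_simplex (v : 'I_n -> R) :=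
  (forall j, 0 <= v j) /\ \sum_(j < n) v j = 1.
Definition in_simplex2 (v : 'I_n -> 'I_n -> R) :=
  (forall j k, 0 <= v j k) /\ \sum_(j < n) \sum_(k < n) v j k = 1.

Definition inZ (z : pt) : Prop :=
  (forall i, in_simplex2 (px z i)) /\ in_simplex (pp z) /\
  (forall i j, -1 <= pyr z i j <= 1) /\ (forall i k, -1 <= pyc z i k <= 1).

Definition dnorm (d : 'I_n -> 'I_n -> R) : R :=
  \big[Num.max/0]_(j < n) \big[Num.max/0]_(k < n) `|d j k|.

(* The operator G(x,y) = (1/m)(dd + 2||d|| A^T y, 2||d||(c - A x)), written
   blockwise:  (A^T y)_x-block i, entry (j,k) = yr i j + yc i k;
   (A^T y)_p = E^T y = - sum_i yr i;  (A x)_i = (X^{(i)}1 - p ; X^{(i)T}1);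
   c_i = (0 ; q_i);  dd = (d,...,d,0). *)
Definition Gop (q : 'I_m -> 'I_n -> R) (d : 'I_n -> 'I_n -> R) (z : pt) : pt :=
  let D := dnorm d in
  Pt (fun i j k => m%:R^-1 * (d j k + 2 * D * (pyr z i j + pyc z i k)))
     (fun j => m%:R^-1 * (2 * D * (- \sum_(i < m) pyr z i j)))
     (fun i j => m%:R^-1 * (2 * D * (0 - (\sum_(k < n) px z i j k - pp z j))))
     (fun i k => m%:R^-1 * (2 * D * (q i k - \sum_(j < n) px z i j k))).

(* t log t, with the convention 0 log 0 = 0 *)
Definition xlnx (t : R) : R := t * ln t.

(* the regularizer r; here
   xhat^T Ahat^T (y)^2 = sum_i sum_{j,k} x i j k (yr i j ^2 + yc i k ^2),
   p^T E^T (y)^2 = - sum_j p j sum_i yr i j ^2 *)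
Definition reg (d : 'I_n -> 'I_n -> R) (z : pt) : R :=
  2 * dnorm d / m%:R *
  (10 * \sum_(i < m) \sum_(j < n) \sum_(k < n) xlnx (px z i j k)
   + 5 * m%:R * \sum_(j < n) xlnx (pp z j)
   + \sum_(i < m) \sum_(j < n) \sum_(k < n)
        px z i j k * (pyr z i j ^+ 2 + pyc z i k ^+ 2)
   - \sum_(j < n) pp z j * (- \sum_(i < m) pyr z i j ^+ 2)).

End Defs.

From HB Require Import structures.
From mathcomp Require Import all_boot all_order all_algebra.
From mathcomp Require Import reals exp.
From mathcomp Require Import classical_sets functions topology normedtype sequences derive.
From mathcomp Require Import ring lra.
Import Order.TTheory GRing.Theory Num.Theory.
Import numFieldNormedType.Exports.
Local Open Scope classical_set_scope.
Local Open Scope ring_scope.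

(* The regularizer and the form <G(a) - G(b), b - c> both split over the
   edges of the incidence matrix A: (x_i[j,k], (y_i)_j), (x_i[j,k], (y_i)_(n+k))
   and (p_j, (y_i)_j).  Up to the common factor 2 |d|_oo / m, the regularizer
   restricted to an edge is h(s, t) = 5 s ln s + s t^2 and the form is, up to
   sign, the area form of the rotation (s, t) |-> (t, -s).  So it suffices that
   h is 3-area-convex on R_+ x [-1, 1].  The Jensen gap of h at the mean (S, T)
   of three points is the sum of the Bregman divergences of h at (S, T), the
   area of the triangle is at most the sum of the |(s - S) (t - T)| over its
   vertices, and each of these is dominated by the corresponding divergence,
   thanks to the bounds sqrt x <= (x - 1) / ln x <= (x + 1) / 2 on the
   logarithmic mean, which control the entropy part. *)

Section EdgeRegularizer.
Context {R : realType}.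

Lemma is_derive_ge0_le {f df : R -> R} :
  (forall x, is_derive x (1 : R) f (df x)) -> (forall x, 0 <= x -> 0 <= df x) ->
  forall y, 0 <= y -> f 0 <= f y.
Proof.
move=> f_df df_ge0 y y0.
have f_cont : {within `[0, y], continuous f}.
  apply: continuous_subspaceT => x; apply: differentiable_continuous.
  by apply/derivable1_diffP; have [] := f_df x.
have [c + f_mvt] := MVT_segment y0 (fun x _ => f_df x) f_cont.
rewrite in_itv /= => /andP[c0 _].
by rewrite -subr_ge0 f_mvt mulr_ge0 ?subr_ge0 ?df_ge0.
Qed.

Lemma logmean_le_arithmean {x : R} : 1 <= x -> 2 * (x - 1) <= (x + 1) * ln x.
Proof.
move=> x_ge1; have x_gt0 : 0 < x by lra.
rewrite -[in X in X <= _](lnK x_gt0) -[in X in _ <= X * _](lnK x_gt0).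
pose f : R -> R := ((id - cst 2) * expR + id + cst 2)%R.
pose df : R -> R := fun y => (y - 1) * expR y + 1.
have f_df y : is_derive y (1 : R) f (df y).
  by apply: is_derive_eq; rewrite /df /= -![_ *: _]/(_ * _) !fctE /=; ring.
have df_ge0 y : 0 <= y -> 0 <= df y.
  move=> _; have := expR_ge1Dx (- y); rewrite expRN.
  rewrite -(ler_pM2l (expR_gt0 y)) mulfV ?gt_eqF ?expR_gt0 // /df; lra.
have := is_derive_ge0_le f_df df_ge0 _ (ln_ge0 x_ge1).
by rewrite /f !fctE /= expR0; lra.
Qed.

Lemma geomean_le_logmean {x : R} : 0 < x -> x <= 1 -> x ^+ 2 - 1 <= 2 * x * ln x.
Proof.
move=> x_gt0 x_le1.
pose f : R -> R := (expR * expR - cst 1 - (cst 2 * id) * expR)%R.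
pose df : R -> R := fun y => 2 * expR y * (expR y - 1 - y).
have f_df y : is_derive y (1 : R) f (df y).
  by apply: is_derive_eq; rewrite /df /= -![_ *: _]/(_ * _) !fctE /=; ring.
have df_ge0 y : 0 <= y -> 0 <= df y.
  move=> _; have := expR_ge1Dx y; have := expR_gt0 y.
  by rewrite /df => ? ?; apply: mulr_ge0; lra.
have := is_derive_ge0_le f_df df_ge0 (- ln x).
rewrite /f !fctE /= expR0 expRN lnK ?posrE // oppr_ge0 ln_le0 //.
rewrite mul1r mulr0 mul0r !subr0 subrr => /(_ isT) gap_ge0.
rewrite -subr_ge0 (_ : _ - _ = x ^+ 2 * (x^-1 / x - 1 - 2 * - ln x / x)).
  exact: mulr_ge0 (sqr_ge0 _) gap_ge0.
by field; rewrite gt_eqF.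
Qed.

Definition xlnx_bregman (s S : R) := xlnx s - xlnx S - (ln S + 1) * (s - S).

Lemma xlnx_bregmanE (s S : R) : 0 < s -> 0 < S ->
  xlnx_bregman s S = S * (s / S * ln (s / S) - s / S + 1).
Proof.
move=> s_gt0 S_gt0; rewrite /xlnx_bregman /xlnx lnM ?posrE ?invr_gt0 // lnV ?posrE //.
by field; rewrite gt_eqF.
Qed.

Lemma xlnx_bregman_ge_above {s S : R} : 0 < S -> S <= s ->
  (s - S) ^+ 2 <= (s + S) * xlnx_bregman s S.
Proof.
move=> S_gt0 Sles; have s_gt0 : 0 < s by lra.
rewrite xlnx_bregmanE //.
have x_ge1 : 1 <= s / S by rewrite ler_pdivlMr // mul1r.
have sE : s = s / S * S by rewrite divfK ?gt_eqF.
have := logmean_le_arithmean x_ge1.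
move: x_ge1 sE; set x := s / S => x_ge1 -> lnx_ge.
have : 0 <= S ^+ 2 * x * ((x + 1) * ln x - 2 * (x - 1)).
  by apply: mulr_ge0; [apply: mulr_ge0 (sqr_ge0 _) _|]; lra.
nra.
Qed.

Lemma xlnx_bregman_ge_below {s S : R} : 0 <= s -> s <= S -> 0 < S ->
  (s - S) ^+ 2 <= 2 * S * xlnx_bregman s S.
Proof.
move=> s_ge0 sleS S_gt0; have [->|s_gt0] := eqVneq s 0.
  rewrite /xlnx_bregman /xlnx mul0r; nra.
have {s_gt0}s_gt0 : 0 < s by rewrite lt_neqAle eq_sym s_gt0.
rewrite xlnx_bregmanE //.
have x_gt0 : 0 < s / S by rewrite divr_gt0.
have x_le1 : s / S <= 1 by rewrite ler_pdivrMr // mul1r.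
have sE : s = s / S * S by rewrite divfK ?gt_eqF.
have := geomean_le_logmean x_gt0 x_le1.
move: x_gt0 x_le1 sE; set x := s / S => x_gt0 x_le1 -> lnx_ge.
nra.
Qed.

Lemma cross_le_amgm (w v k l e : R) : 0 < k -> k <= 2 * l -> w ^+ 2 <= k * e ->
  3 * w * v <= 5 * e + l * v ^+ 2.
Proof.
move=> k_gt0 k_le2l w2_le; rewrite -subr_ge0 -(pmulr_rge0 _ k_gt0).
have : 0 <= (k * v - 3 * w) ^+ 2 + w ^+ 2 by rewrite addr_ge0 ?sqr_ge0.
have : 0 <= k * (2 * l - k) * v ^+ 2.
  by apply: mulr_ge0 (sqr_ge0 _); apply: mulr_ge0; lra.
nra.
Qed.

Definition edge_reg (s t : R) := 5 * xlnx s + s * t ^+ 2.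

Definition edge_bregman (s t S T : R) :=
  edge_reg s t - edge_reg S T - (5 * (ln S + 1) + T ^+ 2) * (s - S)
  - 2 * S * T * (t - T).

Lemma edge_bregmanE (s t S T : R) : edge_bregman s t S T =
  5 * xlnx_bregman s S + s * (t - T) ^+ 2 + 2 * T * (s - S) * (t - T).
Proof. by rewrite /edge_bregman /edge_reg /xlnx_bregman; ring. Qed.

Lemma norm_cross_le_edge_bregman {s t S T : R} : 0 <= s -> 0 < S ->
  -1 <= T <= 1 -> -1 <= t <= 1 -> `|(s - S) * (t - T)| <= edge_bregman s t S T.
Proof.
move=> s_ge0 S_gt0 /andP[T_ge T_le] /andP[t_ge t_le].
rewrite edge_bregmanE; set e := xlnx_bregman s S; set u := t - T.
have tE : t = T + u by rewrite /u addrC subrK.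
rewrite {}tE in t_ge t_le.
have u2E : u ^+ 2 = `|u| ^+ 2 by rewrite real_normK ?num_real.
have /andP[u_ge u_le] : - `|u| <= u <= `|u| by rewrite -ler_norml.
have [Sles|slt] := leP S s.
- have := cross_le_amgm (s - S) `|u| (s + S) s e.
  rewrite normrM (ger0_norm (_ : 0 <= s - S)) ?subr_ge0 // u2E.
  have := xlnx_bregman_ge_above S_gt0 Sles; rewrite -/e.
  have : - `|u| <= T * u by nra.
  nra.
- (* Below the mean, the cross term can only be absorbed using -1 <= T + u <= 1. *)
  have Tu_le : T * u <= `|u| - `|u| ^+ 2.
    by rewrite -u2E; case: (lerP 0 u) => [u_ge0|u_lt0];
       rewrite ?(ger0_norm u_ge0) ?(ltr0_norm u_lt0); nra.
  have := cross_le_amgm (S - s) `|u| (2 * S) (S + (S - s)) e.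
  rewrite normrM (ltr0_norm (_ : s - S < 0)) ?subr_lt0 // u2E.
  have := xlnx_bregman_ge_below s_ge0 (ltW slt) S_gt0; rewrite -/e.
  nra.
Qed.

Lemma norm_cross_le (a b u v : R) :
  `|u * b - v * a| <= `|a * u| + `|b * v| + `|(a + b) * (u + v)|.
Proof.
rewrite -(ler_pXn2r (_ : 0 < 2)%N) ?nnegrE ?addr_ge0 // real_normK ?num_real //.
set P := (a + b) * (u + v); set Q := a * u; set X := b * v.
have -> : (u * b - v * a) ^+ 2 =
    P ^+ 2 + Q ^+ 2 + X ^+ 2 - 2 * (P * Q) - 2 * (P * X) - 2 * (Q * X).
  by rewrite /P /Q /X; ring.
have prod_ge (Y Z : R) : - (Y * Z) <= `|Y| * `|Z| by rewrite -normrM -normrN ler_norm.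
have := prod_ge P Q; have := prod_ge P X; have := prod_ge Q X.
rewrite -(real_normK (num_real P)) -(real_normK (num_real Q)) -(real_normK (num_real X)).
nra.
Qed.

(* <J a - J b, b - c> for the rotation J (s, t) = (t, -s) of R^2. *)
Definition area_form (sa sb sc ta tb tc : R) :=
  (ta - tb) * (sb - sc) - (sa - sb) * (tb - tc).

Lemma edge_reg_area_convex {sa sb sc ta tb tc : R} :
  0 <= sa -> 0 <= sb -> 0 <= sc ->
  -1 <= ta <= 1 -> -1 <= tb <= 1 -> -1 <= tc <= 1 ->
  `|area_form sa sb sc ta tb tc| <=
  3 * (edge_reg sa ta + edge_reg sb tb + edge_reg sc tc
       - 3 * edge_reg (3%:R^-1 * (sa + sb + sc)) (3%:R^-1 * (ta + tb + tc))).
Proof.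
move=> sa_ge0 sb_ge0 sc_ge0 ta_b tb_b tc_b.
have [S_le0|S_gt0] := lerP (3%:R^-1 * (sa + sb + sc)) 0.
  have [-> -> ->] : [/\ sa = 0, sb = 0 & sc = 0] by split; lra.
  by rewrite /area_form /edge_reg /xlnx !(mul0r, mulr0, addr0, subr0, subrr) normr0.
set S := 3%:R^-1 * (sa + sb + sc); set T := 3%:R^-1 * (ta + tb + tc).
have T_b : -1 <= T <= 1.
  move: ta_b tb_b tc_b => /andP[? ?] /andP[? ?] /andP[? ?].
  by rewrite /T; apply/andP; split; lra.
have gapE : edge_reg sa ta + edge_reg sb tb + edge_reg sc tc - 3 * edge_reg S T =
    edge_bregman sa ta S T + edge_bregman sb tb S T + edge_bregman sc tc S T.
  by rewrite /edge_bregman /S /T; field.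
have areaE : area_form sa sb sc ta tb tc =
    3 * ((ta - T) * (sb - S) - (tb - T) * (sa - S)).
  by rewrite /area_form /S /T; field.
have sumE : ((sa - S) + (sb - S)) * ((ta - T) + (tb - T)) = (sc - S) * (tc - T).
  by rewrite /S /T; field.
rewrite gapE; move: areaE => ->; rewrite normrM ger0_norm // ler_pM2l //.
apply: le_trans (norm_cross_le _ _ _ _) _; rewrite sumE.
have := norm_cross_le_edge_bregman sa_ge0 S_gt0 T_b ta_b.
have := norm_cross_le_edge_bregman sb_ge0 S_gt0 T_b tb_b.
have := norm_cross_le_edge_bregman sc_ge0 S_gt0 T_b tc_b.
lra.
Qed.
End EdgeRegularizer.

Section Gap.
Context {R : realType}.

Lemma ler_gap_add (g1 g2 a1 a2 b1 b2 c1 c2 w1 w2 : R) :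
  g1 <= 3 * (a1 + b1 + c1 - 3 * w1) -> g2 <= 3 * (a2 + b2 + c2 - 3 * w2) ->
  g1 + g2 <= 3 * ((a1 + a2) + (b1 + b2) + (c1 + c2) - 3 * (w1 + w2)).
Proof. lra. Qed.

Lemma ler_gap_scale (k g a b c w : R) : 0 <= k ->
  g <= 3 * (a + b + c - 3 * w) -> k * g <= 3 * (k * a + k * b + k * c - 3 * (k * w)).
Proof.
by move=> k_ge0 g_le; nra.
Qed.

Lemma ler_sum_gap (I : finType) (g fa fb fc fw : I -> R) :
  (forall i, g i <= 3 * (fa i + fb i + fc i - 3 * fw i)) ->
  \sum_i g i <= 3 * (\sum_i fa i + \sum_i fb i + \sum_i fc i - 3 * \sum_i fw i).
Proof.
move=> g_le; apply: le_trans (ler_sum _ (fun i _ => g_le i)) _.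
by rewrite -mulr_sumr sumrB -mulr_sumr !big_split.
Qed.
End Gap.

Section Blocks.
Variables (R : realType) (m n : nat) (q : 'I_m -> 'I_n -> R) (d : 'I_n -> 'I_n -> R).

Let K := 2 * dnorm d / m%:R.

Lemma ge0_dnorm : 0 <= dnorm d.
Proof.
apply: (big_ind (fun x : R => 0 <= x)) => // [x y|j _]; first by rewrite le_max => ->.
apply: (big_ind (fun x : R => 0 <= x)) => // x y; by rewrite le_max => ->.
Qed.

Lemma inZ_bounds (z : pt R m n) : inZ z ->
  [/\ forall i j k, 0 <= px z i j k, forall j, 0 <= pp z j,
      forall i j, -1 <= pyr z i j <= 1 & forall i k, -1 <= pyc z i k <= 1].
Proof.
by case=> x_simplex [[p_ge0 _] [yr_b yc_b]]; split => // i j k; case: (x_simplex i).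
Qed.

Lemma reg_edgesE (z : pt R m n) : reg d z = K *
  \sum_(i < m) \sum_(j < n)
    (\sum_(k < n) (edge_reg (px z i j k) (pyr z i j) + edge_reg (px z i j k) (pyc z i k))
     + edge_reg (pp z j) (pyr z i j)).
Proof.
rewrite /reg; congr (_ * _).
have x_part : \sum_(i < m) \sum_(j < n) \sum_(k < n)
    (edge_reg (px z i j k) (pyr z i j) + edge_reg (px z i j k) (pyc z i k)) =
  10 * \sum_(i < m) \sum_(j < n) \sum_(k < n) xlnx (px z i j k)
  + \sum_(i < m) \sum_(j < n) \sum_(k < n) px z i j k * (pyr z i j ^+ 2 + pyc z i k ^+ 2).
  rewrite mulr_sumr -big_split; apply: eq_bigr => i _.
  rewrite mulr_sumr -big_split; apply: eq_bigr => j _.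
  rewrite mulr_sumr -big_split; apply: eq_bigr => k _ /=.
  by rewrite /edge_reg; ring.
have p_part : \sum_(i < m) \sum_(j < n) edge_reg (pp z j) (pyr z i j) =
  5 * m%:R * \sum_(j < n) xlnx (pp z j)
  - \sum_(j < n) pp z j * (- \sum_(i < m) pyr z i j ^+ 2).
  rewrite exchange_big mulr_sumr -sumrB; apply: eq_bigr => j _.
  rewrite big_split sumr_const card_ord mulrN opprK mulr_sumr /=.
  by rewrite -mulr_natr; ring.
under [RHS]eq_bigr do rewrite big_split.
by rewrite big_split /= x_part p_part; ring.
Qed.

Lemma pt_dot_Gop_subE (a b c : pt R m n) :
  pt_dot (pt_sub (Gop q d a) (Gop q d b)) (pt_sub b c) = K *
  \sum_(i < m) \sum_(j < n)
    (\sum_(k < n)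
       (area_form (px a i j k) (px b i j k) (px c i j k) (pyr a i j) (pyr b i j) (pyr c i j)
        + area_form (px a i j k) (px b i j k) (px c i j k) (pyc a i k) (pyc b i k) (pyc c i k))
     - area_form (pp a j) (pp b j) (pp c j) (pyr a i j) (pyr b i j) (pyr c i j)).
Proof.
transitivity (
  \sum_(i < m) \sum_(j < n) \sum_(k < n)
     K * ((pyr a i j - pyr b i j) + (pyc a i k - pyc b i k)) * (px b i j k - px c i j k)
  + \sum_(i < m) \sum_(j < n) - K * (pyr a i j - pyr b i j) * (pp b j - pp c j)
  + \sum_(i < m) \sum_(j < n)
     (\sum_(k < n) - K * (px a i j k - px b i j k) * (pyr b i j - pyr c i j)
      + K * (pp a j - pp b j) * (pyr b i j - pyr c i j))
  + \sum_(i < m) \sum_(j < n) \sum_(k < n)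
     - K * (px a i j k - px b i j k) * (pyc b i k - pyc c i k)).
  rewrite /pt_dot /=; congr (_ + _ + _ + _).
  - do 3 (apply: eq_bigr => ? _); rewrite /K; ring.
  - rewrite exchange_big; apply: eq_bigr => j _ /=.
    by rewrite -mulr_suml -mulr_sumr sumrB /K; ring.
  - do 2 (apply: eq_bigr => ? _).
    by rewrite -mulr_suml -mulr_sumr sumrB /K; ring.
  - apply: eq_bigr => i _; rewrite exchange_big; apply: eq_bigr => k _ /=.
    by rewrite -mulr_suml -mulr_sumr sumrB /K; ring.
have regroup (A B C P Z : R) : A + P + (B + Z) + C = A + B + C + (P + Z) by ring.
rewrite mulr_sumr -!big_split; apply: eq_bigr => i _.
rewrite mulr_sumr -!big_split; apply: eq_bigr => j _ /=.
rewrite regroup -!big_split [in RHS]mulrBr [in RHS]mulr_sumr /=; congr (_ + _).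
  by apply: eq_bigr => k _; rewrite /area_form; ring.
by rewrite /area_form; ring.
Qed.
End Blocks.

Theorem theorem2 (R : realType) (n m : nat) (Hn : (1 <= n)%N) (Hm : (1 <= m)%N)
  (q : 'I_m -> 'I_n -> R) (d : 'I_n -> 'I_n -> R)
  (Hq : forall i, in_simplex (q i)) (Hd : forall j k, 0 <= d j k)
  (a b c : pt R m n) :
  inZ a -> inZ b -> inZ c ->
  pt_dot (pt_sub (Gop q d a) (Gop q d b)) (pt_sub b c)
  <= 3 * (reg d a + reg d b + reg d c
          - 3 * reg d (pt_scale (3%:R^-1) (pt_add (pt_add a b) c))).
Proof.
(* q only enters the constant part of G, which cancels in G a - G b, and d
   only through |d|_oo >= 0. *)
move=> /inZ_bounds[xa pa ra ca] /inZ_bounds[xb pb rb cb] /inZ_bounds[xc pc rc cc].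
rewrite pt_dot_Gop_subE !reg_edgesE.
apply: ler_gap_scale; first by rewrite divr_ge0 ?mulr_ge0 ?ge0_dnorm.
apply: ler_sum_gap => i; apply: ler_sum_gap => j; apply: ler_gap_add.
  apply: ler_sum_gap => k; apply: ler_gap_add.
    by have /ler_normlP[] := edge_reg_area_convex (xa i j k) (xb i j k) (xc i j k)
                                                  (ra i j) (rb i j) (rc i j).
  by have /ler_normlP[] := edge_reg_area_convex (xa i j k) (xb i j k) (xc i j k)
                                                (ca i k) (cb i k) (cc i k).
by have /ler_normlP[] := edge_reg_area_convex (pa j) (pb j) (pc j)
                                              (ra i j) (rb i j) (rc i j).
Qed.
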